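(* Let $(G=(V,E),(p_e))$ be an IC model instance, $\pi$ a policy, $k,d\in\mathbb{Z}^+$. Then $F(\pi,k,d)=F_L(\pi,k,d)$.
   Context: IC model: directed graph $G=(V,E)$, each edge $e$ independently live with probability $p_e\in(0,1]$. Diffusion proceeds in rounds: in each round every node activated in the previous round (seed nodes count as activated when seeded) attempts to activate each inactive out-neighbor along an edge, succeeding iff the edge is live; attempted edges become observed. A realization $\phi=(L(\phi),D(\phi))$ records the observed live and dead edges; $\phi_\emptyset=(\emptyset,\emptyset)$. A policy $\pi$ maps a pair $(S,\phi)$ (current active set, current observed realization) to a single node. The $(\pi,k,d)$-process: set $(S,\phi)=(\emptyset,\phi_\emptyset)$; repeat $k$ times: select and activate $\pi(S,\phi)$, then observe the diffusion for $d$ rounds and update $(S,\phi)$ to the current active set and observed realization; finally let the diffusion terminate. $F(\pi,k,d)$ is the expected final number of active nodes. The L-$(\pi,k,d)$-process: set $(S,\phi)=(\emptyset,\phi_\emptyset)$; repeat $k-1$ times: select and activate $\pi(S,\phi)$, then observe $d$ rounds and update $(S,\phi)$; then decide $v^*=\pi(S,\phi)$ without activating it, wait for the diffusion to terminate, then activate $v^*$ and wait for the diffusion to terminate. $F_L(\pi,k,d)$ is the expected final number of active nodes of this process. *)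

From HB Require Import structures.
From mathcomp Require Import all_boot all_order all_algebra.
Set Implicit Arguments. Unset Strict Implicit. Unset Printing Implicit Defensive.
Import Order.TTheory GRing.Theory Num.Theory.

(* Independent Cascade model on a finite directed graph with node type V and
   edge set E : {set V * V} (edge (u,v) goes from u to v).
   A "world" w : {set V * V} with w \subset E is the set of live edges; each
   edge e in E is live independently with probability p e.  Given the world,
   every process below is deterministic (the policy is deterministic). *)

Section IC.
Variable V : finType.

(* State of the diffusion: active set, observed live edges, observed dead
   edges, and the frontier = nodes activated in the previous round (or
   seeded), which will attempt their out-edges in the next round. *)
Record icstate := IcState {
  act : {set V};
  obs_live : {set V * V};
  obs_dead : {set V * V};
  front : {set V} }.

Definition init_state : icstate := IcState set0 set0 set0 set0.

Definition policy := {set V} -> ({set V * V} * {set V * V}) -> V.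

Variables (E : {set V * V}) (w : {set V * V}).

Definition ic_round (st : icstate) : icstate :=
  let att := [set e in E | (e.1 \in front st) && (e.2 \notin act st)] in
  let newA := [set e.2 | e in att :&: w] in
  IcState (act st :|: newA) (obs_live st :|: (att :&: w))
          (obs_dead st :|: (att :\: w)) newA.

Definition ic_rounds (n : nat) (st : icstate) : icstate := iter n ic_round st.

(* Running until termination: each round with a nonempty frontier either
   activates a new node or empties the frontier, so #|V|.+1 rounds suffice;
   afterwards rounds are no-ops. *)
Definition ic_terminate (st : icstate) : icstate := ic_rounds #|V|.+1 st.

Definition ic_seed (v : V) (st : icstate) : icstate :=
  IcState (act st :|: [set v]) (obs_live st) (obs_dead st)
          (front st :|: ([set v] :\: act st)).

Definition policy_choice (pi : policy) (st : icstate) : V :=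
  pi (act st) (obs_live st, obs_dead st).

Definition ic_stage (pi : policy) (d : nat) (st : icstate) : icstate :=
  ic_rounds d (ic_seed (policy_choice pi st) st).

Definition process_final (pi : policy) (k d : nat) : icstate :=
  ic_terminate (iter k (ic_stage pi d) init_state).

Definition Lprocess_final (pi : policy) (k d : nat) : icstate :=
  let st := iter k.-1 (ic_stage pi d) init_state in
  let vstar := policy_choice pi st in
  ic_terminate (ic_seed vstar (ic_terminate st)).

End IC.

Section Expect.
Local Open Scope ring_scope.
Variables (R : numDomainType) (V : finType) (E : {set V * V}) (p : V * V -> R).

Definition world_prob (w : {set V * V}) : R :=
  \prod_(e in E) (if e \in w then p e else 1 - p e).

Definition expect (f : {set V * V} -> R) : R :=
  \sum_(w : {set V * V} | w \subset E) world_prob w * f w.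

Definition F_IC (pi : policy V) (k d : nat) : R :=
  expect (fun w => (#|act (process_final E w pi k d)|)%:R).

Definition FL_IC (pi : policy V) (k d : nat) : R :=
  expect (fun w => (#|act (Lprocess_final E w pi k d)|)%:R).
End Expect.

(* Fix a world.  From a state in which every active node outside the frontier
   has already tried its live out-edges, running the diffusion to termination
   yields the least live-closed superset of the active set.  Diffusion rounds
   preserve that invariant and do not change which live-closed sets contain
   the active set, so once the k-th seed v is chosen both processes end with
   the least live-closed superset of S :|: [set v], where S is the active set
   after k-1 stages.  The expectations therefore agree world by world. *)
From HB Require Import structures.
From mathcomp Require Import all_boot all_order all_algebra.
Import Order.TTheory GRing.Theory Num.Theory.
Local Open Scope ring_scope.

Section LiveClosure.
Variables (V : finType) (E w : {set V * V}).

Definition live_closed (X : {set V}) :=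
  forall u v, (u, v) \in E -> (u, v) \in w -> u \in X -> v \in X.

Definition consistent (st : icstate V) :=
  front st \subset act st /\
  forall u v, (u, v) \in E -> (u, v) \in w -> u \in act st :\: front st ->
    v \in act st.

Lemma act_seed (x : V) (st : icstate V) : act (ic_seed x st) = act st :|: [set x].
Proof. by []. Qed.

Lemma consistent_init : consistent (init_state V).
Proof. by split=> [|u v _ _]; rewrite ?sub0set ?inE. Qed.

Lemma consistent_seed x st : consistent st -> consistent (ic_seed x st).
Proof.
case=> front_act fired; split=> /=.
  by rewrite subUset (subset_trans front_act (subsetUl _ _))
             (subset_trans (subsetDl _ _) (subsetUr _ _)).
move=> u v uvE uvw; rewrite !inE negb_or negb_and negbK.
case au: (u \in act st) => /=; last by rewrite andbC => /andP[/eqP-> /andP[_ /negP]].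
by rewrite andbT => nfu; rewrite (fired u v) ?inE ?nfu ?au.
Qed.

Lemma consistent_round st : consistent st -> consistent (ic_round E w st).
Proof.
case=> front_act fired; split=> /=; first exact: subsetUr.
move=> u v uvE uvw; rewrite !inE => /andP[nfu /orP[au|fu]]; last by rewrite fu in nfu.
have [fu0|nfu0] := boolP (u \in front st); last by rewrite (fired u v) ?inE ?nfu0.
have [//|av] := boolP (v \in act st); apply/orP; right.
by apply/imsetP; exists (u, v); rewrite ?inE ?uvE ?fu0 ?av ?uvw.
Qed.

Lemma consistent_rounds n st : consistent st -> consistent (ic_rounds E w n st).
Proof. by move=> cst; elim: n => //= n; apply: consistent_round. Qed.

Lemma consistent_stages pi d n : consistent (iter n (ic_stage E w pi d) (init_state V)).
Proof.
elim: n => [|n IHn]; first exact: consistent_init.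
by apply: consistent_rounds; apply: consistent_seed.
Qed.

Lemma act_round_sub_closed st X : front st \subset act st -> live_closed X ->
  (act (ic_round E w st) \subset X) = (act st \subset X).
Proof.
move=> front_act closedX; rewrite subUset; have [actX|//] := boolP (act st \subset X).
apply/subsetP=> z /imsetP[[u v]]; rewrite !inE /= => /andP[/andP[uvE /andP[fu _]] uvw] ->.
exact: closedX uvE uvw (subsetP actX u (subsetP front_act u fu)).
Qed.

Lemma act_rounds_sub_closed n st X : consistent st -> live_closed X ->
  (act (ic_rounds E w n st) \subset X) = (act st \subset X).
Proof.
move=> cst closedX; elim: n => //= n <-.
by apply: act_round_sub_closed => //; case: (consistent_rounds n _ cst).
Qed.

(* The new frontier is disjoint from the old active set, so the active set
   grows in every round that leaves a nonempty frontier. *)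
Lemma front_rounds_card n st :
  front (ic_rounds E w n st) != set0 -> (n <= #|act (ic_rounds E w n st)|)%N.
Proof.
elim: n => //= n IHn; set s := ic_rounds E w n st.
set newA := [set e.2 | e in _ :&: w] => /set0Pn[y newAy].
have frontn : front s != set0.
  case/imsetP: newAy => -[u v]; rewrite !inE /= => /andP[/and3P[_ fu _] _] _.
  by apply/set0Pn; exists u.
have disj : [disjoint act s & newA].
  rewrite -setI_eq0; apply/eqP/setP=> z; rewrite !inE; apply/negP.
  case/andP=> az /imsetP[e]; rewrite !inE => /andP[/and3P[_ _ /negP ne] _] ze.
  by apply: ne; rewrite -ze.
rewrite cardsU (disjoint_setI0 disj) cards0 subn0 -addn1.
by apply: leq_add; [exact: IHn | apply/card_gt0P; exists y].
Qed.

Lemma front_terminate st : front (ic_terminate E w st) = set0.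
Proof.
apply/eqP; apply: contraT => /front_rounds_card.
by rewrite ltnNge max_card.
Qed.

Lemma live_closed_terminate st : consistent st -> live_closed (act (ic_terminate E w st)).
Proof.
move=> /(consistent_rounds #|V|.+1)[_ fired] u v uvE uvw au.
by apply: fired uvE uvw _; rewrite inE -/(ic_terminate E w st) front_terminate inE au.
Qed.

Lemma act_terminate_sub_closed st X : consistent st -> live_closed X ->
  (act (ic_terminate E w st) \subset X) = (act st \subset X).
Proof. exact: act_rounds_sub_closed. Qed.

Lemma live_closed_eq (A B : {set V}) : live_closed A -> live_closed B ->
  (forall X, live_closed X -> (A \subset X) = (B \subset X)) -> A = B.
Proof.
move=> closedA closedB subAB; apply/eqP; rewrite eqEsubset.
by rewrite subAB // subxx -subAB // subxx.
Qed.

Lemma act_process_final_Lprocess pi k d : (0 < k)%N ->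
  act (process_final E w pi k d) = act (Lprocess_final E w pi k d).
Proof.
case: k => // k _; rewrite /process_final /Lprocess_final iterS [k.+1.-1]/=.
set S := iter k _ _; set v := policy_choice pi S.
have cS : consistent S by exact: consistent_stages.
have cT : consistent (ic_rounds E w d (ic_seed v S)).
  by apply: consistent_rounds; apply: consistent_seed.
have cU : consistent (ic_seed v (ic_terminate E w S)).
  by apply: consistent_seed; apply: consistent_rounds.
apply: live_closed_eq; [exact: live_closed_terminate cT | exact: live_closed_terminate cU|].
move=> X closedX; rewrite !act_terminate_sub_closed //.
rewrite act_rounds_sub_closed //; last exact: consistent_seed.
(* Patterns are given explicitly: act (ic_terminate _) unifies with both
   act (ic_seed _ _) and a union. *)
rewrite (act_seed v S) (act_seed v (ic_terminate E w S)).
by rewrite [RHS]subUset act_terminate_sub_closed // -subUset.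
Qed.

End LiveClosure.

Theorem lemma2 (R : realFieldType) (V : finType) (E : {set V * V})
  (p : V * V -> R) (hp : forall e, e \in E -> 0 < p e <= 1)
  (pi : policy V) (k d : nat) (hk : (0 < k)%N) (hd : (0 < d)%N) :
  F_IC E p pi k d = FL_IC E p pi k d.
Proof.
(* The equality holds in every world. *)
by apply: eq_bigr => w _; rewrite act_process_final_Lprocess.
Qed.
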